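(* Let $\Gamma=(U\cup V,E)$ be a $3$-regular bipartite graph with bipartition $U,V$, let $m=|U|=|V|$ and $n=10m$, and let $\hat\Gamma$, $X$, $Y$, $\eta$, $\eta'$, $M$ be as described in the context. Then $$\det(M)=|\{\mu\in \mathrm{UMatch}(\hat\Gamma): \mathrm{sgn}(\mu)=1\}|-|\{\mu\in \mathrm{UMatch}(\hat\Gamma): \mathrm{sgn}(\mu)=-1\}|,$$ where $\mathrm{UMatch}(\hat\Gamma)$ is the set of uniform perfect matchings of $\hat\Gamma$.
   Context: Construction of $\hat\Gamma$: for each vertex $v$ of $\Gamma$ with neighbours $x,y,z$, there are four inner vertices $a_{v,S}$, one for each subset $S\subseteq\{x,y,z\}$ of even size (write $I_v$ for this set), and six outer vertices $b_{v,u,0},b_{v,u,1}$ for $u\in\{x,y,z\}$ (write $O_v$ for this set). Within the gadget, $a_{v,S}$ is adjacent to $b_{v,u,1}$ if $u\in S$ and to $b_{v,u,0}$ if $u\notin S$. For each edge $e=\{u,v\}\in E$ and $i\in\{0,1\}$ there is an edge $e_i$ of $\hat\Gamma$ joining $b_{v,u,i}$ and $b_{u,v,i}$. There are no other edges. Let $X=\bigcup_{v\in U}I_v\cup\bigcup_{v\in V}O_v$ and $Y=\bigcup_{v\in V}I_v\cup\bigcup_{v\in U}O_v$; every edge of $\hat\Gamma$ joins $X$ and $Y$, and $|X|=|Y|=n$. Fix bijections $\eta:X\to[n]$ and $\eta':Y\to[n]$, and let $M$ be the $n\times n$ $\{0,1\}$-matrix with $M(\eta(x),\eta'(y))=1$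 iff $x$ and $y$ are adjacent in $\hat\Gamma$. A perfect matching of $\hat\Gamma$ is identified with a bijection $\mu:X\to Y$ such that $\mu(x)$ is adjacent to $x$ for all $x\in X$; its sign $\mathrm{sgn}(\mu)$ is the sign of the permutation $\eta'\circ\mu\circ\eta^{-1}$ of $[n]$. A perfect matching $\mu$ is uniform if for every $e\in E$ at most one of $e_0,e_1$ belongs to $\mu$. *)

From mathcomp Require Import all_boot all_order all_fingroup all_algebra.
Set Implicit Arguments. Unset Strict Implicit. Unset Printing Implicit Defensive.
Import GRing.Theory.

Section Gadget.
Variables (T : finType) (e : rel T) (U V : {set T}).

Definition nbhd (v : T) : {set T} := [set u | e v u].

(* Vertices of hat Gamma live in the type
     inl (v, A)      = inner vertex a_{v,S}
     inr (v, u, i)   = outer vertex b_{v,u,i}  (i : bool, false = 0, true = 1)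
   restricted to the valid ones by [hvalid]. *)
Definition hatV : finType := ((T * {set T}) + (T * T * bool))%type.

Definition hvalid (w : hatV) : bool :=
  match w with
  | inl (v, A) => (A \subset nbhd v) && ~~ odd #|A|
  | inr (v, u, _) => u \in nbhd v
  end.

Definition inner (v : T) (A : {set T}) : hatV := inl (v, A).
Definition outer (v u : T) (i : bool) : hatV := inr (v, u, i).

Definition gadget_adj (x y : hatV) : bool :=
  match x, y with
  | inl (v, A), inr (v', u, i) => (v' == v) && ((u \in A) == i)
  | _, _ => false
  end.

Definition edge_adj (x y : hatV) : bool :=
  match x, y with
  | inr (v, u, i), inr (v', u', i') => [&& i == i', v' == u & u' == v]
  | _, _ => false
  end.

Definition hadj (x y : hatV) : bool :=
  [&& hvalid x, hvalid y &
      [|| gadget_adj x y, gadget_adj y x | edge_adj x y]].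

Definition Xset : {set hatV} :=
  [set w | hvalid w &&
     match w with
     | inl (v, _) => v \in U
     | inr (v, _, _) => v \in V
     end].

Definition Yset : {set hatV} :=
  [set w | hvalid w &&
     match w with
     | inl (v, _) => v \in V
     | inr (v, _, _) => v \in U
     end].

Variables (n : nat) (etai etai' : 'I_n -> hatV).
(* etai = eta^{-1} : [n] -> X, etai' = eta'^{-1} : [n] -> Y *)

Definition Mmat : 'M[int]_n := \matrix_(i, j) Posz (hadj (etai i) (etai' j) : nat).

(* A perfect matching mu : X -> Y is encoded by the permutation
   sigma = eta' o mu o eta^{-1} of [n]; mu is recovered as
   mu (etai k) = etai' (sigma k). sgn(mu) = sgn(sigma). *)
Definition is_pmatching (s : 'S_n) : bool :=
  [forall k, hadj (etai k) (etai' (s k))].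

Definition in_matching (s : 'S_n) (x y : hatV) : bool :=
  [exists k, ((etai k == x) && (etai' (s k) == y)) ||
             ((etai k == y) && (etai' (s k) == x))].

Definition is_uniform (s : 'S_n) : bool :=
  [forall u, forall v, e u v ==>
     ~~ (in_matching s (outer v u false) (outer u v false) &&
         in_matching s (outer v u true) (outer u v true))].

Definition UMatch_sgn (b : bool) : {set 'S_n} :=
  [set s : 'S_n | [&& is_pmatching s, is_uniform s & odd_perm s == b]].

End Gadget.

(* Leibniz' formula turns det M into the signed sum over all perfect matchings
   of hat Gamma, and the non-uniform ones cancel in pairs.  If both e_0 and e_1
   of an edge {u, v} with u in U are matched, the four inner vertices of the
   gadget of u are matched to the four outer vertices b_{u,z,i} with z <> v;
   these eight vertices form an 8-cycle, so the matching restricted to them is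
   one of the two perfect matchings of that cycle.  Switching to the other one
   composes the permutation with a 4-cycle of rows: this flips the sign, keeps
   {u, v} doubly matched, and is an involution once {u, v} is chosen
   canonically. *)

From mathcomp Require Import all_boot all_order all_fingroup all_algebra.
Import GRing.Theory Num.Theory.
Set Implicit Arguments. Unset Strict Implicit. Unset Printing Implicit Defensive.

Section Cycle4.
Variables (T : finType) (a b c d : T).

Definition cycle4 : {perm T} := tperm c d * tperm b c * tperm a b.

Hypothesis abcd : uniq [:: a; b; c; d].

Let abcd_neq : [&& [&& a != b, a != c & a != d], (b != c) && (b != d) & c != d].
Proof. by move: abcd; rewrite /= !inE !negb_or andbT. Qed.

Lemma cycle4E : [/\ cycle4 a = b, cycle4 b = c, cycle4 c = d & cycle4 d = a].
Proof.
case/and3P: abcd_neq => /and3P[ab ac ad] /andP[bc bd] cd.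
have F (x y : T) : x != y -> ((x == y) = false) * ((y == x) = false).
  by move=> /negbTE xy; rewrite [y == x]eq_sym xy.
rewrite !permM !permE /=.
by rewrite ?(F _ _ ab, F _ _ ac, F _ _ ad, F _ _ bc, F _ _ bd, F _ _ cd, eqxx) /=.
Qed.

Lemma cycle4_id k : k \notin [:: a; b; c; d] -> cycle4 k = k.
Proof.
rewrite !inE !negb_or => /and4P[ka kb kc kd].
by rewrite !permM !tpermD // eq_sym.
Qed.

Lemma odd_cycle4 : odd_perm cycle4.
Proof.
case/and3P: abcd_neq => /and3P[ab _ _] /andP[bc _] cd.
by rewrite !odd_permM !odd_tperm ab bc cd.
Qed.

End Cycle4.

Lemma cycle4V (T : finType) (a b c d : T) :
  uniq [:: a; b; c; d] -> ((cycle4 a b c d)^-1)%g = cycle4 a d c b.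
Proof.
move=> abcd; have [ab bc cd da] := cycle4E abcd.
have rev_bcd : perm_eq [:: a; b; c; d] [:: a; d; c; b].
  by rewrite perm_cons -[[:: d; c; b]]/(rev [:: b; c; d]) perm_sym perm_rev.
have [ad dc cb ba] := cycle4E (etrans (esym (perm_uniq rev_bcd)) abcd).
apply/eqP; rewrite eq_invg_mul; apply/eqP/permP => k; rewrite permM perm1.
have [kabcd|kN] := boolP (k \in [:: a; b; c; d]); last first.
  by rewrite !cycle4_id // -(perm_mem rev_bcd).
by move: kabcd; rewrite !inE => /or4P[] /eqP->; rewrite ?ab ?ad ?bc ?ba ?cd ?cb ?da ?dc.
Qed.

Section SignedSums.
Local Open Scope ring_scope.

Lemma det_bool_mx (R : comPzRingType) n (adj : rel 'I_n) :
  \det (\matrix_(i, j) (adj i j)%:R : 'M[R]_n) =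
  \sum_(s : 'S_n | [forall i, adj i (s i)]) (-1) ^+ s.
Proof.
rewrite /determinant [RHS]big_mkcond /=; apply: eq_bigr => s _.
case: (boolP [forall i, adj i (s i)]) => [/forallP adj_s | /forallPn[i not_adj]].
  by rewrite big1 ?mulr1 // => i _; rewrite mxE adj_s.
by rewrite (bigD1 i) //= mxE (negbTE not_adj) mul0r mulr0.
Qed.

Lemma sum_sign_reversing_involution (I : finType) (R : numDomainType)
    (P : pred I) (f : I -> I) (F : I -> R) :
    (forall x, P x -> [/\ P (f x), f (f x) = x & F (f x) = - F x]) ->
  \sum_(x | P x) F x = 0.
Proof.
move=> fP; pose g x := if P x then f x else x.
have gK : involutive g.
  move=> x; rewrite /g; have [Px|nPx] := boolP (P x); last by rewrite (negPf nPx).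
  by have [Pfx ffx _] := fP x Px; rewrite Pfx ffx.
have S_opp : \sum_(x | P x) F x = - \sum_(x | P x) F x.
  rewrite [LHS](reindex_inj (can_inj gK)) -sumrN; apply: eq_big => x; rewrite /g.
    by case: ifPn => [/fP[->]|/negPf->].
  by case: ifPn => [/fP[_ _ ->]|/negPf->].
by apply/eqP; move/eqP: S_opp; rewrite -addr_eq0 -mulr2n mulrn_eq0.
Qed.

Lemma sum_sign_perm (R : pzRingType) n (P : pred 'S_n) :
  \sum_(s | P s) (-1) ^+ s =
  #|[set s | P s & ~~ odd_perm s]|%:R - #|[set s | P s & odd_perm s]|%:R :> R.
Proof.
rewrite (bigID (fun s : 'S_n => odd_perm s)) /= addrC -!sumr_const -sumrN.
congr (_ + _); apply: eq_big => s; rewrite ?inE //.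
  by case/andP=> _ /negPf->.
by case/andP=> _ ->.
Qed.

End SignedSums.

Section Third.
Variable T : finType.

Definition third (A : {set T}) (v w : T) : T := odflt v [pick z in A :\: [set v; w]].

Variables (A : {set T}) (v : T).
Hypotheses (A3 : #|A| = 3) (vA : v \in A).

Lemma thirdP w : w \in A -> v != w ->
  [/\ third A v w \in A, third A v w != v, third A v w != w & A = [set v; w; third A v w]].
Proof.
move=> wA vw.
have : #|A :\: [set v; w]| == 1.
  by rewrite cardsD (setIidPr _) ?cards2 ?vw ?A3 // subUset !sub1set vA wA.
case/cards1P=> x Dx; have xD : x \in A :\: [set v; w] by rewrite Dx set11.
have -> : third A v w = x.
  rewrite /third; case: pickP => [z|/(_ x)]; last by rewrite xD.
  by rewrite Dx inE => /eqP.
move: xD; rewrite !inE negb_or -andbA => /and3P[xv xw xA].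
split=> //; apply/setP=> z; rewrite !inE.
have /setP/(_ z) := Dx; rewrite !inE negb_or.
have [->|zv] := eqVneq z v; first by rewrite vA ?eqxx.
have [->|zw] := eqVneq z w; first by rewrite wA ?eqxx ?orbT.
by rewrite /= => ->.
Qed.

Lemma thirdK w : w \in A -> v != w -> third A v (third A v w) = w.
Proof.
move=> wA vw; have [xA xv _ DA] := thirdP wA vw.
have vx : v != third A v w by rewrite eq_sym.
have [yA yv yx _] := thirdP xA vx.
move/setP/(_ (third A v (third A v w))): DA.
by rewrite yA !inE (negPf yv) (negPf yx) orbF => /esym/eqP.
Qed.

End Third.

Section Gadget.
Variables (T : finType) (e : rel T) (U V : {set T}).
Hypotheses (e_sym : symmetric e) (UV_disj : [disjoint U & V])
  (e_bip : forall x y, e x y -> ((x \in U) && (y \in V)) || ((x \in V) && (y \in U)))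
  (e_reg : forall v, #|nbhd e v| = 3).
Variables (n : nat) (etai etai' : 'I_n -> hatV T).
Hypotheses (etai_im : forall w, (w \in codom etai) = (w \in Xset e U V))
  (etai'_inj : injective etai').

Local Notation pmatching := (is_pmatching e etai etai').
Local Notation uniform := (is_uniform e etai etai').
Local Notation matched := (in_matching etai etai').

Lemma etai_in_X k : etai k \in Xset e U V.
Proof. by rewrite -etai_im codom_f. Qed.

Lemma hadj_innerP u S y : hadj e (inner u S) y ->
  exists2 z, z \in nbhd e u & y = outer u z (z \in S).
Proof.
case: y => [[v' A]|[[v' z] i]]; rewrite /hadj /gadget_adj /edge_adj /=; first by case/and3P.
by case/and3P=> _ zN /orP[/andP[/eqP Ev /eqP <-]|//]; subst v'; exists z.
Qed.

Lemma hadj_inner_outer u S z i : hvalid e (inner u S) -> z \in nbhd e u ->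
  (z \in S) = i -> hadj e (inner u S) (outer u z i).
Proof. by move=> validS zN <-; rewrite /hadj validS /= zN /= !eqxx. Qed.

Lemma in_matchingC s x y : matched s x y = matched s y x.
Proof. by apply: eq_existsb => k; rewrite orbC. Qed.

Lemma in_matching_mulg (c s : 'S_n) x y :
  (forall k, etai k = x \/ etai k = y -> c k = k) ->
  matched (c * s)%g x y = matched s x y.
Proof.
move=> c_id; apply: eq_existsb => k; rewrite permM.
have [/eqP ex|_] := boolP (etai k == x); first by rewrite c_id ?ex //; left.
have [/eqP ey|_] := boolP (etai k == y); first by rewrite c_id ?ey //; right.
by [].
Qed.

Definition doubly_matched (s : 'S_n) (p : T * T) : bool :=
  [&& e p.1 p.2, p.1 \in U,
      matched s (outer p.2 p.1 false) (outer p.1 p.2 false) &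
      matched s (outer p.2 p.1 true) (outer p.1 p.2 true)].

Lemma not_uniformP s : reflect (exists p, doubly_matched s p) (~~ uniform s).
Proof.
apply: (iffP forallPn) => [[u /forallPn[v]]|[[u v] /and4P[uv _ m0 m1]]].
  rewrite negb_imply negbK => /andP[uv /andP[m0 m1]].
  case/orP: (e_bip uv) => /andP[uU vV].
    by exists (u, v); rewrite /doubly_matched /= uv uU m0 m1.
  exists (v, u); rewrite /doubly_matched /= e_sym uv vV.
  by rewrite in_matchingC m0 in_matchingC m1.
by exists u; apply/forallPn; exists v; rewrite negb_imply negbK uv m0 m1.
Qed.

Definition row_of (x : hatV T) (d : 'I_n) : 'I_n := odflt d [pick k | etai k == x].

Lemma row_ofE x d : x \in Xset e U V -> etai (row_of x d) = x.
Proof.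
rewrite -etai_im => /codomP[k ->]; rewrite /row_of.
by case: pickP => [k' /eqP //|/(_ k)]; rewrite eqxx.
Qed.

Definition outer_nbr (y : hatV T) (d : T) : T := if y is inr (_, z, _) then z else d.

(* Row k of [rotation s u v r0 * s] takes over the partner of the next row in
   the cycle a_{u,{}} -> a_{u,{v,w}} -> a_{u,N(u)\v} -> a_{u,{v,w'}} -> a_{u,{}},
   where b_{u,w,0} is the partner of a_{u,{}} = etai r0 and w' is the third
   neighbour of u. *)
Definition rotation (s : 'S_n) (u v : T) (r0 : 'I_n) : 'S_n :=
  let w := outer_nbr (etai' (s r0)) v in
  cycle4 r0 (row_of (inner u [set v; w]) r0) (row_of (inner u (nbhd e u :\ v)) r0)
            (row_of (inner u [set v; third (nbhd e u) v w]) r0).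

Section Rotation.
Variables (s : 'S_n) (u v : T) (r0 : 'I_n).
Hypotheses (pm_s : pmatching s) (uv_dm : doubly_matched s (u, v))
  (er0 : etai r0 = inner u set0).

Let w := outer_nbr (etai' (s r0)) v.
Let w' := third (nbhd e u) v w.
Let r1 := row_of (inner u [set v; w]) r0.
Let r2 := row_of (inner u (nbhd e u :\ v)) r0.
Let r3 := row_of (inner u [set v; w']) r0.

Let uU : u \in U. Proof. by case/and4P: uv_dm. Qed.
Let vN : v \in nbhd e u. Proof. by case/and4P: uv_dm; rewrite inE. Qed.

Let match_inj k k' : etai' (s k) = etai' (s k') -> k = k'.
Proof. by move/etai'_inj/perm_inj. Qed.

Let inner_not_v k S i : etai k = inner u S -> etai' (s k) != outer u v i.
Proof.
move=> ek; have : matched s (outer v u i) (outer u v i) by case: i; case/and4P: uv_dm.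
case/existsP=> k' /orP[/andP[/eqP ek' /eqP sk']|/andP[/eqP ek' _]].
  apply/eqP=> sk; have kk' : k = k' by apply: match_inj; rewrite sk sk'.
  by move: ek; rewrite kk' ek'.
have := etai_in_X k'; rewrite ek' inE /= => /andP[_ uV].
by rewrite (disjointFr UV_disj uU) in uV.
Qed.

Let inner_target k S : etai k = inner u S ->
  exists2 z, (z \in nbhd e u) && (z != v) & etai' (s k) = outer u z (z \in S).
Proof.
move=> ek; have /forallP/(_ k) := pm_s; rewrite ek => /hadj_innerP[z zN sk].
exists z => //; rewrite zN; apply/eqP=> zv.
by move: (inner_not_v (z \in S) ek); rewrite sk zv eqxx.
Qed.

Let w_spec : [/\ w \in nbhd e u, w != v & etai' (s r0) = outer u w false].
Proof.
have [z /andP[zN zv] sr0] := inner_target er0.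
by rewrite /w sr0 /= in_set0.
Qed.

Let w'_spec : [/\ w' \in nbhd e u, w' != v, w' != w & nbhd e u = [set v; w; w']].
Proof. by case: w_spec => wN wv _; apply: thirdP; rewrite // eq_sym. Qed.

Let neqE : [/\ (w == v) = false, (w' == v) = false & (w' == w) = false].
Proof. by case: w_spec => _ /negPf wv _; case: w'_spec => _ /negPf w'v /negPf w'w _. Qed.

Let inner_target2 k S : etai k = inner u S ->
  etai' (s k) = outer u w (w \in S) \/ etai' (s k) = outer u w' (w' \in S).
Proof.
case/inner_target=> z /andP[+ zv] ->; case: w'_spec => _ _ _ ->.
by rewrite !inE (negPf zv) /= => /orP[]/eqP->; [left | right].
Qed.

Let rows_inner : [/\ etai r1 = inner u [set v; w], etai r2 = inner u (nbhd e u :\ v)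
  & etai r3 = inner u [set v; w']].
Proof.
case: w_spec => wN _ _; case: w'_spec => w'N _ _ _; case: neqE => wv w'v _.
split; apply: row_ofE; rewrite inE /= uU andbT.
- by rewrite subUset !sub1set vN wN cards2 eq_sym wv.
- by rewrite subsetDl; move: (cardsD1 v (nbhd e u)); rewrite vN e_reg add1n => -[<-].
- by rewrite subUset !sub1set vN w'N cards2 eq_sym w'v.
Qed.

Let rows_uniq : uniq [:: r0; r1; r2; r3].
Proof.
pose pattern k := if etai k is inl (_, A) then (v \in A, w \in A) else (false, false).
apply: (@map_uniq _ _ pattern); case: rows_inner => er1 er2 er3.
have := vN; case: w_spec; rewrite !inE => uw _ _ uv; case: neqE => wv _ w'w.
by rewrite /= /pattern er0 er1 er2 er3 !inE !eqxx (eq_sym v) wv (eq_sym w) w'w uv uw.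
Qed.

Let target0 : etai' (s r0) = outer u w false.
Proof. by case: w_spec. Qed.

Let target3 : etai' (s r3) = outer u w' true.
Proof.
case: rows_inner => _ _ /inner_target2[sr3|->]; last by rewrite !inE eqxx orbT.
case: w_spec => _ _ s0; case: neqE => wv _ w'w.
have /match_inj r30 : etai' (s r3) = etai' (s r0) by rewrite sr3 s0 !inE wv eq_sym w'w.
by move: rows_uniq; rewrite r30 /= !inE !eqxx ?orbT ?andbF.
Qed.

Let target2 : etai' (s r2) = outer u w true.
Proof.
case: w_spec w'_spec neqE => wN _ _ [w'N _ _ _] [wv w'v _].
case: rows_inner => _ /inner_target2[->|sr2] _; first by rewrite in_setD1 wv wN.
have /match_inj r23 : etai' (s r2) = etai' (s r3) by rewrite sr2 target3 in_setD1 w'v w'N.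
by move: rows_uniq; rewrite r23 /= !inE !eqxx ?orbT ?andbF.
Qed.

Let target1 : etai' (s r1) = outer u w' false.
Proof.
case: rows_inner => /inner_target2[sr1|->] _ _; last by case: neqE => _ w'v w'w; rewrite !inE w'v w'w.
have /match_inj r12 : etai' (s r1) = etai' (s r2) by rewrite sr1 target2 !inE eqxx orbT.
by move: rows_uniq; rewrite r12 /= !inE !eqxx ?orbT ?andbF.
Qed.

Let rotationE : rotation s u v r0 = cycle4 r0 r1 r2 r3. Proof. by []. Qed.

Let hadj_row k S z i : etai k = inner u S -> z \in nbhd e u -> (z \in S) = i ->
  hadj e (etai k) (outer u z i).
Proof.
move=> ek zN zi; rewrite ek; apply: hadj_inner_outer zN zi.
by have := etai_in_X k; rewrite ek inE => /andP[].
Qed.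

Lemma rotation_pmatching : pmatching (rotation s u v r0 * s)%g.
Proof.
case: w_spec w'_spec neqE rows_inner => wN _ s0 [w'N _ _ _] [wv w'v w'w] [er1 er2 er3].
have [c0 c1 c2 c3] := cycle4E rows_uniq.
apply/forallP=> k; rewrite permM rotationE.
have [|k_out] := boolP (k \in [:: r0; r1; r2; r3]); first rewrite mem_seq4.
move=> /or4P[]/eqP->.
- by rewrite c0 target1; apply: hadj_row er0 w'N _; rewrite in_set0.
- by rewrite c1 target2; apply: hadj_row er1 wN _; rewrite !inE eqxx orbT.
- by rewrite c2 target3; apply: hadj_row er2 (w'N) _; rewrite in_setD1 w'v w'N.
- by rewrite c3 target0; apply: hadj_row er3 wN _; rewrite !inE wv (eq_sym w) w'w.
by rewrite cycle4_id //; move/forallP: pm_s.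
Qed.

Lemma doubly_matched_rotation :
  doubly_matched (rotation s u v r0 * s)%g =1 doubly_matched s.
Proof.
case: rows_inner => er1 er2 er3.
move=> [a b]; rewrite /doubly_matched !in_matching_mulg // => k [] ek;
  rewrite rotationE cycle4_id // mem_seq4;
  by apply/negP=> /or4P[]/eqP kr; move: ek; rewrite kr ?er0 ?er1 ?er2 ?er3.
Qed.

Lemma rotationK : rotation (rotation s u v r0 * s)%g u v r0 = (rotation s u v r0)^-1%g.
Proof.
case: w_spec => wN wv _; have [c0 _ _ _] := cycle4E rows_uniq.
set s' := (rotation s u v r0 * s)%g.
have s'r0 : etai' (s' r0) = outer u w' false by rewrite permM rotationE c0 target1.
by rewrite /rotation s'r0 /= (thirdK (e_reg u) vN wN) 1?eq_sym // -rotationE cycle4V.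
Qed.

Lemma odd_rotation : odd_perm (rotation s u v r0).
Proof. exact: odd_cycle4 rows_uniq. Qed.

End Rotation.

Definition flip (s : 'S_n) : 'S_n :=
  if [pick p | doubly_matched s p] is Some (u, v) then
    if [pick k | etai k == inner u set0] is Some r0 then (rotation s u v r0 * s)%g else s
  else s.

Lemma flipP s : pmatching s -> ~~ uniform s ->
  [/\ pmatching (flip s), ~~ uniform (flip s), flip (flip s) = s
    & odd_perm (flip s) = ~~ odd_perm s].
Proof.
move=> pm_s /not_uniformP[p0 p0_dm].
case p_pick: [pick p | doubly_matched s p] => [[u v]|]; last first.
  by move: p_pick; case: pickP => // /(_ p0); rewrite p0_dm.
have uv_dm : doubly_matched s (u, v) by move: p_pick; case: pickP => // p + [<-].
have /codomP[r0 er0] : inner u set0 \in codom etai.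
  by rewrite etai_im inE /= sub0set cards0; case/and4P: uv_dm.
case r_pick: [pick k | etai k == inner u set0] => [r|]; last first.
  by move: r_pick; case: pickP => // /(_ r0); rewrite er0 eqxx.
have {r0 er0} er : etai r = inner u set0 by move: r_pick; case: pickP => // k /eqP + [<-].
have flip_s : flip s = (rotation s u v r * s)%g by rewrite /flip p_pick r_pick.
rewrite flip_s; split.
- exact: rotation_pmatching.
- by apply/not_uniformP; exists (u, v); rewrite doubly_matched_rotation.
- rewrite /flip (eq_pick (doubly_matched_rotation pm_s uv_dm er)) p_pick r_pick.
  by rewrite rotationK // mulgA mulVg mul1g.
- by rewrite odd_permM odd_rotation.
Qed.

Lemma sum_sign_nonuniform :
  (\sum_(s : 'S_n | pmatching s && ~~ uniform s) (-1) ^+ s = 0 :> int)%R.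
Proof.
apply: (@sum_sign_reversing_involution _ _ _ flip) => s /andP[pm_s nu_s].
have [pm_f nu_f ffs ->] := flipP pm_s nu_s.
by rewrite pm_f nu_f ffs; split=> //; case: (odd_perm s); rewrite ?expr0 ?expr1 ?opprK.
Qed.

End Gadget.

Local Open Scope ring_scope.

Theorem mainTheorem2 (T : finType) (e : rel T) (U V : {set T})
  (e_sym : symmetric e) (e_irr : irreflexive e)
  (UV_disj : [disjoint U & V]) (UV_cov : U :|: V = setT)
  (e_bip : forall x y, e x y -> ((x \in U) && (y \in V)) || ((x \in V) && (y \in U)))
  (e_reg : forall v, #|nbhd e v| = 3%N)
  (m : nat) (hmU : #|U| = m) (hmV : #|V| = m) (n : nat) (hn : n = (10 * m)%N)
  (etai etai' : 'I_n -> hatV T)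
  (etai_inj : injective etai) (etai_im : forall w, (w \in codom etai) = (w \in Xset e U V))
  (etai'_inj : injective etai') (etai'_im : forall w, (w \in codom etai') = (w \in Yset e U V)) :
  \det (Mmat e etai etai') =
    (Posz #|UMatch_sgn e etai etai' false| - Posz #|UMatch_sgn e etai etai' true|).
Proof.
have -> : Mmat e etai etai' = \matrix_(i, j) (hadj e (etai i) (etai' j))%:R.
  by apply/matrixP=> i j; rewrite !mxE natz.
rewrite det_bool_mx (bigID (is_uniform e etai etai')) /=.
rewrite (sum_sign_nonuniform e_sym UV_disj e_bip e_reg etai_im etai'_inj) addr0.
rewrite sum_sign_perm -!natz.
by congr (_%:R - _%:R); apply: eq_card => s; rewrite !inE -andbA ?eqbF_neg ?eqb_id.
Qed.
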